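(* Let $A, B_1, \ldots, B_m \in \mathbb{C}^{d\times d}$. Define the $d^2\times d^2$ matrices \[ D_{A,B}=\overline{A}\otimes A+\sum_{k=1}^m \overline{B}_k\otimes B_k,\qquad C_{A,B}=\overline{A}\otimes I+I\otimes A+\sum_{k=1}^m \overline{B}_k\otimes B_k, \] and the $d\times d$ Hermitian matrices \[ N_{A,B}=A^*A+\sum_{k=1}^m B_k^*B_k,\qquad M_{A,B}=A+A^*+\sum_{k=1}^m B_k^*B_k. \] Then \[ \varrho(N_{A,B})\le \rho(D_{A,B})\le \alpha(N_{A,B}),\qquad \varrho(M_{A,B})\le \alpha(C_{A,B})\le \alpha(M_{A,B}). \]
   Context: For a matrix $X$, $\overline{X}$ is the entrywise complex conjugate, $X^*$ the conjugate transpose, $I$ the identity matrix, and $\otimes$ the Kronecker product ($X\otimes Y$ is the block matrix with blocks $X_{ij}Y$). For a square matrix $X$: $\rho(X)=\max\{|\lambda|:\lambda \text{ eigenvalue of } X\}$ (spectral radius), $\alpha(X)=\max\{\operatorname{Re}\lambda:\lambda \text{ eigenvalue of } X\}$ (spectral abscissa), and $\varrho(X)=\min\{\operatorname{Re}\lambda:\lambda \text{ eigenvalue of } X\}$. For a Hermitian matrix, $\varrho$ and $\alpha$ are its smallest and largest eigenvalues. *)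

From HB Require Import structures.
From mathcomp Require Import all_boot all_order all_algebra.
From mathcomp Require Import classical_sets reals.
From mathcomp.real_closed Require Import complex mxtens.
Set Implicit Arguments. Unset Strict Implicit. Unset Printing Implicit Defensive.
Import Order.TTheory GRing.Theory Num.Theory.
Local Open Scope ring_scope.
Local Open Scope classical_set_scope.

(* The spectral quantities are the sup/inf of the (finite) sets
   {|z|} resp. {Re z} over eigenvalues z; for d >= 1 these are max/min. *)

Definition mxconj (R : realType) m n (X : 'M[R[i]]_(m, n)) : 'M[R[i]]_(m, n) :=
  map_mx (@conjc R) X.

Definition mxadj (R : realType) m n (X : 'M[R[i]]_(m, n)) : 'M[R[i]]_(n, m) :=
  (mxconj X)^T.

Definition spec_rad (R : realType) n (X : 'M[R[i]]_n) : R :=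
  sup [set r : R | exists z : R[i], eigenvalue X z /\ r = ComplexField.Normc.normc z].

Definition spec_abs (R : realType) n (X : 'M[R[i]]_n) : R :=
  sup [set r : R | exists z : R[i], eigenvalue X z /\ r = complex.Re z].

Definition spec_min (R : realType) n (X : 'M[R[i]]_n) : R :=
  inf [set r : R | exists z : R[i], eigenvalue X z /\ r = complex.Re z].

Definition D_AB (R : realType) d m (A : 'M[R[i]]_d) (B : 'I_m -> 'M[R[i]]_d)
  : 'M[R[i]]_(d * d) :=
  mxconj A *t A + \sum_(k < m) (mxconj (B k) *t B k).

Definition C_AB (R : realType) d m (A : 'M[R[i]]_d) (B : 'I_m -> 'M[R[i]]_d)
  : 'M[R[i]]_(d * d) :=
  mxconj A *t (1%:M : 'M[R[i]]_d) + (1%:M : 'M[R[i]]_d) *t A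
  + \sum_(k < m) (mxconj (B k) *t B k).

Definition N_AB (R : realType) d m (A : 'M[R[i]]_d) (B : 'I_m -> 'M[R[i]]_d)
  : 'M[R[i]]_d :=
  mxadj A *m A + \sum_(k < m) (mxadj (B k) *m B k).

Definition M_AB (R : realType) d m (A : 'M[R[i]]_d) (B : 'I_m -> 'M[R[i]]_d)
  : 'M[R[i]]_d :=
  A + mxadj A + \sum_(k < m) (mxadj (B k) *m B k).

From HB Require Import structures.
From mathcomp Require Import all_boot all_order all_algebra.
From mathcomp Require Import classical_sets reals.
From mathcomp.real_closed Require Import complex mxtens.
From mathcomp Require Import mxred sesquilinear spectral ring lra.
Set Implicit Arguments. Unset Strict Implicit. Unset Printing Implicit Defensive.
Import Order.TTheory GRing.Theory Num.Theory.
Local Open Scope ring_scope.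

(* Under the row-major vectorisation [vec], D_AB is the matrix of the completely
   positive map Phi(V) = A^* V A + sum_k B_k^* V B_k and C_AB that of the Lyapunov
   map L(V) = A^* V + V A + sum_k B_k^* V B_k; moreover Phi(I) = N_AB, L(I) = M_AB.

   Upper bounds: if Phi(V) = z V with V <> 0, let x be a top eigenvector of V^* V.
   Pairing Phi(V) between V x and x and applying Cauchy-Schwarz to each term bounds
   |z| by the largest Rayleigh quotient of N_AB; the same pairing for L bounds Re z
   by that of M_AB.

   Lower bounds: Phi is positive and Phi(I) >= lambda_min(N_AB) I, hence
   Phi^k(I) >= lambda_min(N_AB)^k I. A Schur triangularisation of D_AB rescaled so
   that its off-diagonal part is eps-small has row sums at most rho(D_AB) + eps, so
   the entries of Phi^k(I) grow at most like (rho(D_AB) + eps)^k. For C_AB the same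
   argument is run on the positive map V |-> (I + a A)^* V (I + a A) + a L'(V),
   L'(V) = sum_k B_k^* V B_k, whose matrix is I + a C_AB + a^2 (conj A (x) A): it
   dominates (1 + a lambda_min(M_AB)) I and, for small a > 0, is similar to a
   matrix with row sums at most 1 + a (alpha(C_AB) + 2 eps). *)

Section ComplexFacts.
Variable R : realType.
Local Notation C := R[i].

(* [conjc_real], stated with the head symbol [Num.conj] so that it rewrites. *)
Lemma conj_realc (r : R) : (r%:C%C : C)^* = r%:C%C.
Proof. exact: conjc_real. Qed.

Lemma ger0_ReE (x : C) : 0 <= x -> (complex.Re x)%:C%C = x.
Proof. by move=> x_ge0; rewrite RRe_real // ger0_real. Qed.

Lemma addC_conj (z : C) : z + z^* = (complex.Re z *+ 2)%:C%C.
Proof. by case: z => x y; apply/eqP; rewrite eq_complex /= mulr2n subrr !eqxx. Qed.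

Lemma norm_normc (z : C) : `|z| = (ComplexField.Normc.normc z)%:C%C.
Proof. by case: z => x y; rewrite normc_def. Qed.

Lemma norm_1p_le (w : C) : `|1 + w| <= (1 + complex.Re w)%:C%C + `|w| ^+ 2.
Proof.
rewrite !norm_normc -rmorphXn -rmorphD lecR; case: w => x y /=.
rewrite sqr_sqrtr; last by nra.
have t_ge0 : 0 <= x ^+ 2 + y ^+ 2 by nra.
have rhs_ge0 : 0 <= 1 + x + (x ^+ 2 + y ^+ 2) by nra.
by rewrite -(ger0_norm rhs_ge0) -sqrtr_sqr ler_sqrt; nra.
Qed.

End ComplexFacts.

Section Adjoint.
Variable R : realType.
Local Notation C := R[i].

Fact mxadj_is_zmod_morphism m n : zmod_morphism (@mxadj R m n).
Proof. by move=> X Y; apply/matrixP => i j; rewrite !mxE rmorphB. Qed.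

HB.instance Definition _ m n :=
  GRing.isZmodMorphism.Build 'M[C]_(m, n) 'M[C]_(n, m) (@mxadj R m n)
    (@mxadj_is_zmod_morphism m n).

Lemma mxadjD m n (X Y : 'M[C]_(m, n)) : mxadj (X + Y) = mxadj X + mxadj Y.
Proof. exact: raddfD. Qed.

Lemma mxadj_trmxC m n (X : 'M[C]_(m, n)) : mxadj X = map_mx Num.Def.conjC X^T.
Proof. by rewrite /mxadj /mxconj map_trmx. Qed.

Lemma mxadjK m n (X : 'M[C]_(m, n)) : mxadj (mxadj X) = X.
Proof. by apply/matrixP => i j; rewrite !mxE conjcK. Qed.

Lemma mxadjM m n p (X : 'M[C]_(m, n)) (Y : 'M[C]_(n, p)) :
  mxadj (X *m Y) = mxadj Y *m mxadj X.
Proof.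
apply/matrixP => i j; rewrite !mxE rmorph_sum; apply: eq_bigr => k _.
by rewrite !mxE rmorphM mulrC.
Qed.

Lemma mxadjZ m n a (X : 'M[C]_(m, n)) : mxadj (a *: X) = a^* *: mxadj X.
Proof. by apply/matrixP => i j; rewrite !mxE rmorphM. Qed.

Lemma mxadj1 n : mxadj (1%:M : 'M[C]_n) = 1%:M.
Proof. by apply/matrixP => i j; rewrite !mxE eq_sym rmorphMn rmorph1. Qed.

Lemma mxconj1 n : mxconj (1%:M : 'M[C]_n) = 1%:M.
Proof. by apply/matrixP => i j; rewrite !mxE conjc_nat. Qed.

Lemma mxadj_scalar11 (X : 'M[C]_1) : mxadj X 0 0 = (X 0 0)^*.
Proof. by rewrite !mxE. Qed.

End Adjoint.

Section Vectorization.
Variable R : realType.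
Local Notation C := R[i].

Lemma sum_mxtens_index d (F : 'I_(d * d) -> C) :
  \sum_k F k = \sum_(i < d) \sum_(j < d) F (mxtens_index (i, j)).
Proof.
rewrite (reindex (@mxtens_index d d)) /=; last first.
  by exists (@mxtens_unindex d d) => x _; rewrite (mxtens_indexK, mxtens_unindexK).
by rewrite pair_big /=; apply: eq_bigr => -[i j].
Qed.

Definition unvec d (v : 'rV[C]_(d * d)) : 'M[C]_d :=
  \matrix_(i, j) v 0 (mxtens_index (i, j)).

Definition vec d (V : 'M[C]_d) : 'rV[C]_(d * d) :=
  \row_k V (mxtens_unindex k).1 (mxtens_unindex k).2.

Fact unvec_is_linear d : linear (@unvec d).
Proof. by move=> a v w; apply/matrixP => i j; rewrite !mxE. Qed.

HB.instance Definition _ d :=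
  GRing.isLinear.Build C 'rV[C]_(d * d) 'M[C]_d _ (@unvec d)
    (@unvec_is_linear d).

Lemma unvecD d (v w : 'rV[C]_(d * d)) : unvec (v + w) = unvec v + unvec w.
Proof. exact: linearD. Qed.

Lemma unvecZ d a (v : 'rV[C]_(d * d)) : unvec (a *: v) = a *: unvec v.
Proof. exact: linearZ. Qed.

Lemma vecK d : cancel (@vec d) (@unvec d).
Proof. by move=> V; apply/matrixP => i j; rewrite !mxE mxtens_indexK. Qed.

Lemma unvecK d : cancel (@unvec d) (@vec d).
Proof.
move=> v; apply/rowP => k; rewrite !mxE; case: (mxtens_indexP k) => i j.
by rewrite mxtens_indexK.
Qed.

Fact vec_is_linear d : linear (@vec d).
Proof. by move=> a V W; apply/rowP => k; rewrite !mxE. Qed.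

HB.instance Definition _ d :=
  GRing.isLinear.Build C 'M[C]_d 'rV[C]_(d * d) _ (@vec d)
    (@vec_is_linear d).

Lemma unvec_eq0 d (v : 'rV[C]_(d * d)) : (unvec v == 0) = (v == 0).
Proof. by rewrite raddf_eq0 //; exact: can_inj (@unvecK d). Qed.

Lemma unvec_mul_tens d (v : 'rV[C]_(d * d)) (X Y : 'M[C]_d) :
  unvec (v *m (mxconj X *t Y)) = mxadj X *m unvec v *m Y.
Proof.
apply/matrixP => j1 j2; rewrite !mxE sum_mxtens_index.
under eq_bigr do under eq_bigr do rewrite tensmxE.
rewrite exchange_big /=; apply: eq_bigr => i2 _; rewrite !mxE big_distrl /=.
by apply: eq_bigr => i1 _; rewrite !mxE; ring.
Qed.

End Vectorization.

Section QuadraticForms.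
Variable R : realType.
Local Notation C := R[i].

Definition qform n (H : 'M[C]_n) (u : 'cV[C]_n) := (mxadj u *m H *m u) 0 0.
Definition sqnorm n (u : 'cV[C]_n) := (mxadj u *m u) 0 0.

Lemma sqnormE n (u : 'cV[C]_n) : sqnorm u = \sum_i (u i 0)^* * u i 0.
Proof. by rewrite /sqnorm mxE; apply: eq_bigr => i _; rewrite !mxE. Qed.

Lemma sqnorm_ge0 n (u : 'cV[C]_n) : 0 <= sqnorm u.
Proof. by rewrite sqnormE sumr_ge0 // => i _; rewrite mulrC mul_conjC_ge0. Qed.

Lemma sqnorm_eq0 n (u : 'cV[C]_n) : sqnorm u = 0 -> u = 0.
Proof.
rewrite sqnormE => /eqP; rewrite psumr_eq0 => [/allP u0|i _]; last first.
  by rewrite mulrC mul_conjC_ge0.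
apply/matrixP => i j; rewrite ord1 mxE; apply/eqP.
by move: (u0 i (mem_index_enum i)) => /=; rewrite mulrC mul_conjC_eq0.
Qed.

Lemma sqnorm_gt0 n (u : 'cV[C]_n) : u != 0 -> 0 < sqnorm u.
Proof.
move=> u0; rewrite lt_def sqnorm_ge0 andbT.
by apply: contra u0 => /eqP/sqnorm_eq0->.
Qed.

Lemma conj_sqnorm n (u : 'cV[C]_n) : (sqnorm u)^* = sqnorm u.
Proof. by apply/CrealP; rewrite ger0_real // sqnorm_ge0. Qed.

Lemma sqnormZ n a (u : 'cV[C]_n) : sqnorm (a *: u) = (a^* * a) * sqnorm u.
Proof. by rewrite /sqnorm mxadjZ -scalemxAl -scalemxAr !mxE mulrA. Qed.

Lemma conj_bilinear n (X : 'M[C]_n) (a b : 'cV[C]_n) :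
  ((mxadj a *m X *m b) 0 0)^* = (mxadj b *m mxadj X *m a) 0 0.
Proof. by rewrite -mxadj_scalar11 !mxadjM mxadjK mulmxA. Qed.

Lemma conj_dot n (a b : 'cV[C]_n) : ((mxadj a *m b) 0 0)^* = (mxadj b *m a) 0 0.
Proof. by rewrite -mxadj_scalar11 !mxadjM mxadjK. Qed.

Lemma dot_add_conj_le n (a b : 'cV[C]_n) :
  (mxadj a *m b) 0 0 + (mxadj b *m a) 0 0 <= sqnorm a + sqnorm b.
Proof.
have sqnormB : sqnorm (a - b) =
    sqnorm a + sqnorm b - ((mxadj a *m b) 0 0 + (mxadj b *m a) 0 0).
  by rewrite /sqnorm [mxadj _]raddfB mulmxBl !mulmxBr !mxE; ring.
by rewrite -subr_ge0 -sqnormB sqnorm_ge0.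
Qed.

Lemma qformDl n (H1 H2 : 'M[C]_n) u : qform (H1 + H2) u = qform H1 u + qform H2 u.
Proof. by rewrite /qform mulmxDr mulmxDl mxE. Qed.

Lemma qformZl n a (H : 'M[C]_n) u : qform (a *: H) u = a * qform H u.
Proof. by rewrite /qform -scalemxAr -scalemxAl mxE. Qed.

Lemma qform_suml n I (r : seq I) (P : pred I) (F : I -> 'M[C]_n) u :
  qform (\sum_(i <- r | P i) F i) u = \sum_(i <- r | P i) qform (F i) u.
Proof.
elim/big_rec2: _ => [|i x y _ <-]; last by rewrite qformDl.
by rewrite /qform mulmx0 mul0mx mxE.
Qed.

Lemma qform1 n (u : 'cV[C]_n) : qform 1%:M u = sqnorm u.
Proof. by rewrite /qform mulmx1. Qed.

Lemma qform_subr_scalar n (H : 'M[C]_n) c u :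
  qform (H - c *: 1%:M) u = qform H u - c * sqnorm u.
Proof. by rewrite qformDl -scaleNr qformZl qform1 mulNr. Qed.

Lemma qform_congr n (H K : 'M[C]_n) u : qform (mxadj K *m H *m K) u = qform H (K *m u).
Proof. by rewrite /qform mxadjM !mulmxA. Qed.

Lemma qform_gram n (K : 'M[C]_n) u : qform (mxadj K *m K) u = sqnorm (K *m u).
Proof. by rewrite -[mxadj K]mulmx1 qform_congr qform1. Qed.

Lemma sqnorm_shift n (A : 'M[C]_n) (a : R) u :
  sqnorm ((1%:M + a%:C%C *: A) *m u) =
  sqnorm u + a%:C%C * (qform A u + qform (mxadj A) u) + a%:C%C * a%:C%C * sqnorm (A *m u).
Proof.
rewrite -qform_gram mxadjD mxadj1 mxadjZ conj_realc mulmxDl !mulmxDr !mul1mx mulmx1.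
by rewrite -!scalemxAl -!scalemxAr !qformDl !qformZl qform1 qform_gram; ring.
Qed.

Definition psdmx n (Y : 'M[C]_n) := forall u, 0 <= qform Y u.

Lemma psdmx0 n : psdmx (0 : 'M[C]_n).
Proof. by move=> u; rewrite /qform mulmx0 mul0mx mxE. Qed.

End QuadraticForms.

Section HermitianSpectrum.
Variable R : realType.
Local Notation C := R[i].

Lemma hermitian_diagonalization n (H : 'M[C]_n) : mxadj H = H ->
  exists2 P : 'M[C]_n, P *m mxadj P = 1%:M &
  exists s : 'I_n -> R, H = mxadj P *m diag_mx (\row_i (s i)%:C%C) *m P.
Proof.
move=> hH.
have Hnormal : H \is normalmx by apply/normalmxP; rewrite -!mxadj_trmxC hH.
have Hherm : H \is hermsymmx by rewrite qualifE /= expr0 scale1r -mxadj_trmxC hH.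
have /orthomx_spectralP HP := Hnormal.
have Pu := spectral_unitarymx H.
rewrite invmx_unitary // -mxadj_trmxC in HP.
exists (spectralmx H); first by rewrite mxadj_trmxC; apply/unitarymxP.
exists (fun i => complex.Re (spectral_diag H 0 i)); rewrite {1}HP.
congr (_ *m diag_mx _ *m _); apply/rowP => i; rewrite mxE RRe_real //.
by move/mxOverP: (hermitian_spectral_diag_real Hherm); apply.
Qed.

Lemma hermitian_rayleigh n (H : 'M[C]_n) : (0 < n)%N -> mxadj H = H ->
  exists lmin lmax : R,
   [/\ forall u, lmin%:C%C * sqnorm u <= qform H u,
       forall u, qform H u <= lmax%:C%C * sqnorm u,
       exists2 u : 'cV[C]_n, u != 0 & H *m u = lmin%:C%C *: u &
       exists2 u : 'cV[C]_n, u != 0 & H *m u = lmax%:C%C *: u].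
Proof.
move=> n_gt0 /hermitian_diagonalization[P PP' [s ->]].
have PP : mxadj P *m P = 1%:M by apply: mulmx1C.
set D := diag_mx _.
pose x (v : 'cV[C]_n) i := (P *m v) i 0.
have x_ge0 v i : 0 <= (x v i)^* * x v i by rewrite mulrC mul_conjC_ge0.
have qformE v : qform (mxadj P *m D *m P) v = \sum_i (s i)%:C%C * ((x v i)^* * x v i).
  rewrite qform_congr /qform mul_mx_diag mxE; apply: eq_bigr => i _.
  by rewrite /x !mxE; ring.
have sqnormPE v : sqnorm v = \sum_i (x v i)^* * x v i.
  by rewrite -sqnormE /sqnorm mxadjM -mulmxA (mulmxA (mxadj P)) PP mul1mx.
have eigvec i : exists2 u : 'cV[C]_n, u != 0 & mxadj P *m D *m P *m u = (s i)%:C%C *: u.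
  exists (mxadj P *m delta_mx i 0).
    apply/eqP => /(congr1 (mulmx P)); rewrite mulmxA PP' mul1mx mulmx0.
    by move/matrixP/(_ i 0); rewrite !mxE !eqxx => /eqP; rewrite oner_eq0.
  rewrite -!mulmxA [P *m (_ *m _)]mulmxA PP' mul1mx mul_diag_mx scalemxAr.
  congr (_ *m _); apply/matrixP => a b; rewrite !mxE.
  by case: (eqVneq a i) => [->|]; rewrite ?mulr1 ?mulr0.
pose i0 : 'I_n := Ordinal n_gt0.
pose imin := [arg min_(i < i0) s i]%O.
pose imax := [arg max_(i > i0) s i]%O.
have s_min i : s imin <= s i by rewrite /imin; case: arg_minP => // j _; apply.
have s_max i : s i <= s imax by rewrite /imax; case: arg_maxP => // j _; apply.
exists (s imin), (s imax); split; try exact: eigvec.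
- move=> v; rewrite qformE sqnormPE mulr_sumr; apply: ler_sum => i _.
  by apply: ler_wpM2r => //; rewrite lecR.
- move=> v; rewrite qformE sqnormPE mulr_sumr; apply: ler_sum => i _.
  by apply: ler_wpM2r => //; rewrite lecR.
Qed.

End HermitianSpectrum.

Section KrausMaps.
Variable R : realType.
Local Notation C := R[i].

Variables (p d : nat) (K : 'I_p -> 'M[C]_d).

Definition kraus_map (V : 'M[C]_d) := \sum_k mxadj (K k) *m V *m K k.
Definition kraus_mx : 'M[C]_(d * d) := \sum_k (mxconj (K k) *t K k).
Definition kraus_gram : 'M[C]_d := \sum_k mxadj (K k) *m K k.

Lemma unvec_mul_kraus_mx v : unvec (v *m kraus_mx) = kraus_map (unvec v).
Proof.
rewrite mulmx_sumr linear_sum; apply: eq_bigr => k _.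
exact: unvec_mul_tens.
Qed.

Lemma kraus_map1 : kraus_map 1%:M = kraus_gram.
Proof. by apply: eq_bigr => k _; rewrite mulmx1. Qed.

Lemma kraus_gram_hermitian : mxadj kraus_gram = kraus_gram.
Proof.
by rewrite /kraus_gram raddf_sum /=; apply: eq_bigr => k _; rewrite mxadjM mxadjK.
Qed.

Lemma qform_kraus_map Y u : qform (kraus_map Y) u = \sum_k qform Y (K k *m u).
Proof. by rewrite qform_suml; apply: eq_bigr => k _; rewrite qform_congr. Qed.

Lemma qform_kraus_gram u : qform kraus_gram u = \sum_k sqnorm (K k *m u).
Proof. by rewrite -kraus_map1 qform_kraus_map; under eq_bigr do rewrite qform1. Qed.

Lemma kraus_map_psd Y : psdmx Y -> psdmx (kraus_map Y).
Proof. by move=> Ypsd u; rewrite qform_kraus_map sumr_ge0. Qed.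

Lemma kraus_bilinear V (a b : 'cV[C]_d) :
  (mxadj a *m kraus_map V *m b) 0 0 =
  \sum_k (mxadj (K k *m a) *m (V *m (K k *m b))) 0 0.
Proof.
rewrite mulmx_sumr mulmx_suml summxE; apply: eq_bigr => k _.
by rewrite mxadjM !mulmxA.
Qed.

(* Cauchy-Schwarz, term by term in the Kraus sum. *)
Lemma kraus_bilinear_Re_le V (mu : C) (a x : 'cV[C]_d) :
  (forall u, sqnorm (V *m u) <= mu * sqnorm u) ->
  let w := (mxadj a *m kraus_map V *m x) 0 0 in
  w + w^* <= qform kraus_gram a + mu * qform kraus_gram x.
Proof.
move=> Vmu /=; rewrite kraus_bilinear rmorph_sum -big_split /=.
apply: (@le_trans _ _ (\sum_k (sqnorm (K k *m a) + sqnorm (V *m (K k *m x))))).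
  by apply: ler_sum => k _; rewrite conj_dot dot_add_conj_le.
rewrite big_split /= !qform_kraus_gram mulr_sumr lerD2l.
by apply: ler_sum => k _; apply: Vmu.
Qed.

End KrausMaps.

Section UpperBounds.
Variable R : realType.
Local Notation C := R[i].

Lemma gram_top_eigen n (V : 'M[C]_n) : V != 0 ->
  exists mu : R, exists2 x : 'cV[C]_n, x != 0 &
   [/\ 0 < mu, mxadj V *m (V *m x) = mu%:C%C *: x &
       forall u, sqnorm (V *m u) <= mu%:C%C * sqnorm u].
Proof.
move=> V0.
have [j Vj0] : exists j, V *m delta_mx j 0 != 0 :> 'cV[C]_n.
  case: (pickP (fun j => V *m delta_mx j 0 != 0 :> 'cV[C]_n)) => [j|Vj0]; first by exists j.
  case/negP: V0; apply/eqP/matrixP => i j.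
  by move/negbFE/eqP/matrixP/(_ i 0): (Vj0 j); rewrite -colE !mxE.
have n_gt0 : (0 < n)%N by case: n j {V V0 Vj0} => [[]|].
have [_ [mu [_ Vmu _ [x x0 Hx]]]] :=
  hermitian_rayleigh n_gt0 (kraus_gram_hermitian (fun _ : 'I_1 => V)).
rewrite /kraus_gram big_ord1 in Vmu Hx.
have {}Vmu u : sqnorm (V *m u) <= mu%:C%C * sqnorm u by rewrite -qform_gram.
exists mu, x => //; split => //; last by rewrite mulmxA.
have ej0 : delta_mx j 0 != 0 :> 'cV[C]_n by apply: contraNneq Vj0 => ->; rewrite mulmx0.
have := lt_le_trans (sqnorm_gt0 Vj0) (Vmu _).
by rewrite pmulr_lgt0 ?sqnorm_gt0 // ltcR.
Qed.

Lemma phase_exists (z : C) : exists c : C, c^* * c = 1 /\ c^* * z = `|z|.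
Proof.
have [->|z0] := eqVneq z 0; first by exists 1; rewrite rmorph1 mulr1 normr0 mulr0.
have nz0 : `|z| != 0 by rewrite normr_eq0.
exists (z / `|z|); rewrite rmorphM rmorphV ?unitfE //= conj_normC; split.
  by rewrite mulrACA -invfM -normCKC -expr2 mulfV // expf_neq0.
by rewrite mulrAC -normCKC expr2 mulfK.
Qed.

Lemma kraus_eigen_norm_le p n (K : 'I_p -> 'M[C]_n) (lam : R) z V :
  (forall u, qform (kraus_gram K) u <= lam%:C%C * sqnorm u) -> V != 0 ->
  kraus_map K V = z *: V -> `|z| <= lam%:C%C.
Proof.
move=> Klam V0 Vz.
have [mu [x x0 [mu_gt0 Hx Vmu]]] := gram_top_eigen V0.
have [c [cc cz]] := phase_exists z.
set y := V *m x.
have y_sqnorm : sqnorm y = mu%:C%C * sqnorm x.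
  by rewrite /sqnorm mxadjM -mulmxA Hx -scalemxAr mxE.
have w_eq : (mxadj (c *: y) *m kraus_map K V *m x) 0 0 = `|z| * sqnorm y.
  have yVx : mxadj y *m V *m x = mxadj y *m y by rewrite -mulmxA.
  by rewrite Vz mxadjZ -scalemxAr -!scalemxAl yVx /sqnorm !mxE -cz; ring.
have := kraus_bilinear_Re_le K (c *: y) x Vmu; rewrite /= w_eq.
rewrite rmorphM /= conj_normC conj_sqnorm => w_le.
have Klam_cy : qform (kraus_gram K) (c *: y) <= lam%:C%C * sqnorm y.
  by rewrite (le_trans (Klam _)) // sqnormZ cc mul1r.
have Klam_x : mu%:C%C * qform (kraus_gram K) x <= lam%:C%C * sqnorm y.
  by rewrite y_sqnorm mulrCA; apply: ler_wpM2l; rewrite ?lecR ?Klam ?(ltW mu_gt0).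
have := le_trans w_le (lerD Klam_cy Klam_x).
rewrite -!mulr2n ler_pMn2r // ler_pM2r //.
by rewrite y_sqnorm mulr_gt0 ?ltcR ?sqnorm_gt0.
Qed.

Lemma lyapunov_eigen_Re_le p n (A : 'M[C]_n) (B : 'I_p -> 'M[C]_n) (lam : R) z V :
  (forall u, qform (A + mxadj A + kraus_gram B) u <= lam%:C%C * sqnorm u) ->
  V != 0 -> mxadj A *m V + V *m A + kraus_map B V = z *: V ->
  complex.Re z <= lam.
Proof.
move=> Mlam V0 Vz.
have [mu [x x0 [mu_gt0 Hx Vmu]]] := gram_top_eigen V0.
set y := V *m x.
have y_sqnorm : sqnorm y = mu%:C%C * sqnorm x.
  by rewrite /sqnorm mxadjM -mulmxA Hx -scalemxAr mxE.
pose b (X : 'M[C]_n) := (mxadj y *m X *m x) 0 0.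
have bD X Y : b (X + Y) = b X + b Y by rewrite /b mulmxDr mulmxDl mxE.
have b_conj X : (b X)^* = (mxadj x *m mxadj X *m y) 0 0 by rewrite conj_bilinear.
have bV : b (z *: V) = z * (mu%:C%C * sqnorm x).
  by rewrite /b -scalemxAr -scalemxAl mxE -y_sqnorm /sqnorm mulmxA.
have bAV : b (mxadj A *m V) = qform (mxadj A) y by rewrite /b /qform -!mulmxA.
have bVA : b (V *m A) = mu%:C%C * qform A x.
  have yV : mxadj y *m V = mu%:C%C *: mxadj x.
    by rewrite -[V in LHS]mxadjK -mxadjM Hx mxadjZ conj_realc.
  by rewrite /b mulmxA yV -!scalemxAl mxE.
have := kraus_bilinear_Re_le B y x Vmu; rewrite /= -/(b _) => w_le.
have Re_eq : (z + z^*) * (mu%:C%C * sqnorm x) =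
    qform (A + mxadj A) y + mu%:C%C * qform (A + mxadj A) x +
    (b (kraus_map B V) + (b (kraus_map B V))^*).
  have E := congr1 b Vz; rewrite !bD bAV bVA bV in E.
  set P := mu%:C%C * sqnorm x in E *.
  have conjP : P^* = P by rewrite rmorphM /= conj_realc conj_sqnorm.
  have -> : (z + z^*) * P = z * P + (z * P)^* by rewrite rmorphM /= conjP mulrDl.
  rewrite -E !qformDl !rmorphD rmorphM /= conj_realc /qform !conj_bilinear mxadjK.
  by ring.
set M := A + mxadj A + kraus_gram B in Mlam *.
have le_M : (z + z^*) * (mu%:C%C * sqnorm x) <= qform M y + mu%:C%C * qform M x.
  rewrite Re_eq ![qform M _]qformDl mulrDr [X in _ <= X]addrACA lerD2l.
  exact: w_le.
have le_lam : qform M y + mu%:C%C * qform M x <= 2 * lam%:C%C * (mu%:C%C * sqnorm x).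
  apply: le_trans (lerD (Mlam y) (ler_wpM2l _ (Mlam x))) _; first by rewrite lecR ltW.
  by rewrite y_sqnorm le_eqVlt; apply/orP; left; apply/eqP; ring.
have := le_trans le_M le_lam; rewrite ler_pM2r; last first.
  by rewrite mulr_gt0 ?ltcR ?sqnorm_gt0.
by rewrite addC_conj mulr_natl -rmorphMn lecR ler_pMn2r.
Qed.

End UpperBounds.

Section GeometricGrowth.
Variable F : archiFieldType.

Lemma bernoulli_le (h : F) k : 0 <= h -> 1 + k%:R * h <= (1 + h) ^+ k.
Proof.
move=> h_ge0; elim: k => [|k IHk]; first by rewrite mul0r addr0 expr0.
rewrite exprS; apply: le_trans (ler_wpM2l _ IHk); last lra.
by rewrite -natr1; have : 0 <= k%:R :> F by []; nra.
Qed.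

Lemma geometric_le (c s K : F) : 0 <= s -> (forall k, c ^+ k <= K * s ^+ k) -> c <= s.
Proof.
move=> s_ge0 cK; rewrite leNgt; apply/negP => s_lt_c.
have [s0|s_gt0] := eqVneq s 0.
  by have := cK 1%N; rewrite s0 expr1 mulr0; lra.
have {}s_gt0 : 0 < s by rewrite lt_def s_gt0.
pose h := c / s - 1.
have h_gt0 : 0 < h by rewrite subr_gt0 ltr_pdivlMr // mul1r.
have K_ge1 : 1 <= K by have := cK 0%N; rewrite !expr0 mulr1.
have cE : c = (1 + h) * s by rewrite /h addrC subrK mulfVK // gt_eqF.
pose k := Num.bound (K / h).
have Kk : K / h < k%:R by apply: archi_boundP; rewrite divr_ge0 //; lra.
have := cK k; rewrite cE exprMn ler_pM2r ?exprn_gt0 // => hK.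
have := le_trans (bernoulli_le k (ltW h_gt0)) hK.
by move: Kk; rewrite ltr_pdivrMr //; lra.
Qed.

End GeometricGrowth.

Section RowSums.
Variable F : numDomainType.

Lemma norm_le_rowsum m n (M : 'M[F]_(m, n)) i j : `|M i j| <= \sum_j `|M i j|.
Proof. by rewrite (bigD1 j) //= lerDl sumr_ge0. Qed.

Lemma sum_norm_ge0 m n (M : 'M[F]_(m, n)) : 0 <= \sum_i \sum_j `|M i j|.
Proof. by rewrite sumr_ge0 // => i _; rewrite sumr_ge0. Qed.

Lemma rowsum_le_sum m n (M : 'M[F]_(m, n)) i :
  \sum_j `|M i j| <= \sum_i \sum_j `|M i j|.
Proof. by rewrite (bigD1 i) //= lerDl sumr_ge0 // => *; rewrite sumr_ge0. Qed.

Lemma rowsum_mulmx_exp n (Y : 'M[F]_n) (s : F) (z : 'rV[F]_n) k :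
  0 <= s -> (forall i, \sum_j `|Y i j| <= s) ->
  \sum_j `|(z *m Y ^+ k) 0 j| <= s ^+ k * \sum_j `|z 0 j|.
Proof.
move=> s_ge0 Ys; elim: k => [|k IHk]; first by rewrite expr0 mulmx1 mul1r.
rewrite exprSr -mulmxE mulmxA; set w := z *m Y ^+ k in IHk *.
apply: (@le_trans _ _ (\sum_j \sum_i `|w 0 i| * `|Y i j|)).
  apply: ler_sum => j _; rewrite mxE; apply: le_trans (ler_norm_sum _ _ _) _.
  by apply: ler_sum => i _; rewrite normrM.
rewrite exchange_big /=; apply: (@le_trans _ _ (\sum_i `|w 0 i| * s)).
  by apply: ler_sum => i _; rewrite -mulr_sumr ler_wpM2l.
by rewrite -mulr_suml exprSr mulrAC ler_wpM2r.
Qed.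

Lemma mulmx_exp_similar_bound n (G Q : 'M[F]_n) (s : F) (v : 'rV[F]_n) :
  Q \in unitmx -> 0 <= s ->
  (forall i, \sum_j `|(Q *m G *m invmx Q) i j| <= s) ->
  exists2 K, 0 <= K & forall k j, `|(v *m G ^+ k) 0 j| <= K * s ^+ k.
Proof.
move=> Qu s_ge0 Ts; set T := Q *m G *m invmx Q in Ts.
have vGk k : v *m G ^+ k = v *m invmx Q *m T ^+ k *m Q.
  elim: k => [|k IHk]; first by rewrite !expr0 !mulmx1 mulmxKV.
  by rewrite !exprSr -!mulmxE !mulmxA IHk /T mulmxKV.
pose Z := \sum_j `|(v *m invmx Q) 0 j|.
pose Qs := \sum_i \sum_j `|Q i j|.
have Qs_ge0 : 0 <= Qs := sum_norm_ge0 Q.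
exists (Z * Qs) => [|k j]; first by rewrite mulr_ge0 // sumr_ge0.
rewrite vGk mxE; apply: le_trans (ler_norm_sum _ _ _) _.
apply: (@le_trans _ _ (\sum_i `|(v *m invmx Q *m T ^+ k) 0 i| * Qs)).
  apply: ler_sum => i _; rewrite normrM ler_wpM2l //.
  exact: le_trans (norm_le_rowsum _ _ j) (rowsum_le_sum _ _).
by rewrite -mulr_suml mulrAC ler_wpM2r // mulrC rowsum_mulmx_exp.
Qed.

End RowSums.

Section PositiveMaps.
Variable R : realType.
Local Notation C := R[i].

Lemma qform_delta n (Y : 'M[C]_n) i : qform Y (delta_mx i 0) = Y i i.
Proof.
have adj_delta : mxadj (delta_mx i 0) = delta_mx 0 i :> 'rV[C]_n.
  by apply/matrixP => a b; rewrite !mxE rmorph_nat andbC.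
by rewrite /qform adj_delta -rowE -colE !mxE.
Qed.

Section Iteration.
Variables (d : nat) (G : 'M[C]_(d * d)).
Hypothesis G_psd : forall Y, psdmx Y -> psdmx (unvec (vec Y *m G)).

Lemma positive_map_exp_ge (c : C) : 0 <= c ->
  psdmx (unvec (vec 1%:M *m G) - c *: 1%:M) ->
  forall k, psdmx (unvec (vec 1%:M *m G ^+ k) - c ^+ k *: 1%:M).
Proof.
move=> c_ge0 G1c; elim=> [|k IHk].
  by rewrite expr0 mulmx1 vecK scale1r subrr; apply: psdmx0.
set X := unvec (vec 1%:M *m G ^+ k) - c ^+ k *: 1%:M in IHk.
have -> : vec 1%:M *m G ^+ k.+1 = vec X *m G + c ^+ k *: (vec 1%:M *m G).
  by rewrite raddfB /= linearZ /= unvecK mulmxBl -scalemxAl subrK exprSr -mulmxE mulmxA.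
rewrite linearD linearZ /= exprSr -scalerA -addrA -scalerBr => u.
by rewrite qformDl qformZl addr_ge0 ?mulr_ge0 ?exprn_ge0 ?G_psd.
Qed.

(* A positive map with [G(I) >= c I] has [G^k(I) >= c^k I], whose growth is
   bounded by any row-sum bound of a matrix similar to [G]. *)
Lemma positive_map_growth_le (Q : 'M[C]_(d * d)) (c s : R) :
  (0 < d)%N -> Q \in unitmx ->
  psdmx (unvec (vec 1%:M *m G) - c%:C%C *: 1%:M) ->
  (forall i, \sum_j `|(Q *m G *m invmx Q) i j| <= s%:C%C) -> c <= s.
Proof.
move=> d_gt0 Qu G1c Ts.
pose i0 : 'I_d := Ordinal d_gt0.
have s_ge0 : 0 <= s.
  by rewrite -lecR; apply: le_trans (Ts (mxtens_index (i0, i0))); apply: sumr_ge0.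
have [c_le0|c_gt0] := lerP c 0; first exact: le_trans c_le0 s_ge0.
have sC_ge0 : 0 <= s%:C%C :> C by rewrite lecR.
have [K K_ge0 Kbound] := mulmx_exp_similar_bound (vec (1%:M : 'M[C]_d)) Qu sC_ge0 Ts.
apply: (@geometric_le _ c s (complex.Re K)) => // k.
rewrite -lecR rmorphM !rmorphXn /= ger0_ReE //.
apply: le_trans (Kbound k (mxtens_index (i0, i0))).
have cC_ge0 : 0 <= c%:C%C :> C by rewrite lecR ltW.
have := positive_map_exp_ge cC_ge0 G1c k (delta_mx i0 0).
rewrite qform_subr_scalar -qform1 !qform_delta [unvec _ _ _]mxE [1%:M _ _]mxE.
rewrite eqxx mulr1 subr_ge0 => ck.
have w_real : (vec 1%:M *m G ^+ k) 0 (mxtens_index (i0, i0)) \is Num.real.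
  by apply: ger0_real; apply: le_trans ck; rewrite exprn_ge0.
exact: le_trans ck (real_ler_norm w_real).
Qed.

End Iteration.
End PositiveMaps.

Section DiagonalScaling.
Variable F : fieldType.

Lemma eigenvalue_similar n (Q X : 'M[F]_n) a :
  Q \in unitmx -> eigenvalue (Q *m X *m invmx Q) a -> eigenvalue X a.
Proof.
move=> Qu; rewrite -conjumx //; apply: eigenvalue_conjmx.
  exact: stablemx_unit.
by rewrite row_free_unit.
Qed.

Lemma eigenvalue_trig n (T : 'M[F]_n) i : is_trig_mx T -> eigenvalue T (T i i).
Proof.
move=> Ttrig; rewrite eigenvalue_root_char char_poly_trig //.
by rewrite (bigD1 i) //= rootM root_XsubC eqxx.
Qed.

Lemma diag_scaling_entry n (T : 'M[F]_n) (x : F) i j :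
  (diag_mx (\row_k x ^+ k) *m T *m diag_mx (\row_k x^-1 ^+ k)) i j =
  x ^+ i * x^-1 ^+ j * T i j.
Proof. by rewrite mul_mx_diag mul_diag_mx !mxE mulrAC. Qed.

Lemma diag_scaling_inv n (x : F) : x != 0 ->
  diag_mx (\row_k x ^+ k) *m diag_mx (\row_k x^-1 ^+ k) = 1%:M :> 'M[F]_n.
Proof.
move=> x0; rewrite mulmx_diag; apply/matrixP => i j; rewrite !mxE.
by rewrite -exprMn mulfV // expr1n.
Qed.

End DiagonalScaling.

Lemma scaled_trig_entry_le (F : numFieldType) n (T : 'M[F]_n) (x : F) (i j : 'I_n) :
  is_trig_mx T -> 0 < x <= 1 -> j != i ->
  `|x ^+ i * x^-1 ^+ j * T i j| <= x * `|T i j|.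
Proof.
move=> /is_trig_mxP Ttrig /andP[x_gt0 x_le1] ji.
case: (ltngtP i j) => [lt_ij|lt_ji|/val_inj eq_ij]; last by rewrite eq_ij eqxx in ji.
  by rewrite Ttrig // mulr0 normr0 mulr0.
rewrite -(subnK (ltnW lt_ji)) exprD -(mulrA (x ^+ (i - j))) -exprMn mulfV ?gt_eqF // expr1n mulr1.
rewrite normrM ler_wpM2r // ger0_norm ?exprn_ge0 ?(ltW x_gt0) //.
have : (0 < i - j)%N by rewrite subn_gt0.
case: (i - j)%N => // k _.
by rewrite exprS ler_piMr ?exprn_ile1 ?(ltW x_gt0).
Qed.

Section NearTriangular.
Variable R : realType.
Local Notation C := R[i].

Lemma exists_small_scaling (w eps : R) : 0 <= w -> 0 < eps ->
  exists del : R, [/\ 0 < del, del <= 1 & del * w <= eps].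
Proof.
move=> w_ge0 eps_gt0; have q_gt0 : 0 < eps / (w + 1) by rewrite divr_gt0 //; lra.
exists (Num.min 1 (eps / (w + 1))); split; first by rewrite lt_min ltr01.
  by rewrite ge_min lexx.
apply: (@le_trans _ _ (eps / (w + 1) * w)).
  by rewrite ler_wpM2r // ge_min lexx orbT.
by rewrite mulrAC ler_pdivrMr; [nra|lra].
Qed.

(* Schur triangularisation followed by the diagonal scaling [diag (del ^ i)],
   which shrinks the strictly triangular part by [del]. *)
Lemma near_triangular_similar n (X : 'M[C]_n) (eps : R) :
  (0 < n)%N -> 0 < eps ->
  exists2 Q : 'M[C]_n, Q \in unitmx &
   (forall i, eigenvalue X ((Q *m X *m invmx Q) i i)) /\
   (forall i, \sum_(j | j != i) `|(Q *m X *m invmx Q) i j| <= eps%:C%C).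
Proof.
move=> n_gt0 eps_gt0.
have [P /unitarymx_unit Pu Ptrig] := Schur X n_gt0.
rewrite /similar_to /= conjumx // in Ptrig; set T := P *m X *m invmx P in Ptrig.
pose W := \sum_i \sum_j `|T i j|.
have W_ge0 : 0 <= W := sum_norm_ge0 T.
have [del [del_gt0 del_le1 delW]] :
    exists del : R, [/\ 0 < del, del <= 1 & del * complex.Re W <= eps].
  by apply: exists_small_scaling; rewrite // -lecR ger0_ReE.
pose x : C := del%:C%C.
have x_gt0 : 0 < x by rewrite ltcR.
pose D : 'M[C]_n := diag_mx (\row_k x ^+ k).
pose D' : 'M[C]_n := diag_mx (\row_k x^-1 ^+ k).
have DD' : D *m D' = 1%:M by apply: diag_scaling_inv; rewrite gt_eqF.
pose Q := D *m P.
have QQ : Q *m (invmx P *m D') = 1%:M by rewrite /Q mulmxA -(mulmxA D) mulmxV // mulmx1.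
have Qu : Q \in unitmx by case: (mulmx1_unit QQ).
have QXQ : Q *m X *m invmx Q = D *m T *m D'.
  have -> : invmx Q = invmx P *m D'.
    by rewrite -[invmx Q]mulmx1 -QQ mulmxA mulVmx // mul1mx.
  by rewrite /Q /T !mulmxA.
exists Q => //; rewrite QXQ; split => i.
  rewrite diag_scaling_entry -exprMn mulfV ?gt_eqF // expr1n mul1r.
  exact/(eigenvalue_similar Pu)/eigenvalue_trig.
apply: (@le_trans _ _ (\sum_(j | j != i) x * `|T i j|)).
  apply: ler_sum => j ji; rewrite diag_scaling_entry scaled_trig_entry_le //.
  by rewrite x_gt0 lecR.
rewrite -mulr_sumr; apply: (@le_trans _ _ (x * W)).
  rewrite ler_wpM2l ?(ltW x_gt0) //; apply: le_trans (rowsum_le_sum _ i).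
  by rewrite [X in _ <= X](bigD1 i) //= lerDr.
by rewrite -(ger0_ReE W_ge0) -rmorphM lecR.
Qed.

End NearTriangular.

Section Spectrum.
Variable R : realType.
Local Notation C := R[i].
Local Open Scope classical_set_scope.

Lemma sup_eq_max (E : set R) x : E x -> ubound E x -> sup E = x.
Proof.
move=> Ex ubx; apply/eqP; rewrite eq_le (ge_sup (ex_intro _ x Ex) ubx).
exact: ub_le_sup (ex_intro _ x ubx) _ Ex.
Qed.

Lemma inf_eq_min (E : set R) x : E x -> lbound E x -> inf E = x.
Proof.
move=> Ex lbx; apply/eqP; rewrite eq_le (lb_le_inf (ex_intro _ x Ex) lbx) andbT.
exact: ge_inf (ex_intro _ x lbx) _ Ex.
Qed.

Lemma spec_sup_le n (X : 'M[C]_n) (f : C -> R) b : (0 < n)%N ->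
  (forall z, eigenvalue X z -> f z <= b) ->
  sup [set r | exists z, eigenvalue X z /\ r = f z] <= b.
Proof.
move=> n_gt0 fb; have [z Xz] := eigenvalue_closed X n_gt0.
by apply: ge_sup => [|_ [w [Xw ->]]]; [exists (f z), z | exact: fb].
Qed.

Lemma spec_sup_ge n (X : 'M[C]_n) (f : C -> R) b z :
  (forall z, eigenvalue X z -> f z <= b) -> eigenvalue X z ->
  f z <= sup [set r | exists z, eigenvalue X z /\ r = f z].
Proof.
move=> fb Xz; apply: ub_le_sup; last by exists z.
by exists b => _ [w [Xw ->]]; exact: fb.
Qed.

Lemma eigenvalue_col n (H : 'M[C]_n) (r : R) (u : 'cV[C]_n) :
  mxadj H = H -> u != 0 -> H *m u = r%:C%C *: u -> eigenvalue H r%:C%C.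
Proof.
move=> hH u0 Hu; apply/eigenvalueP; exists (mxadj u).
  by rewrite -{1}hH -mxadjM Hu mxadjZ conj_realc.
by apply: contraNneq u0 => u0'; rewrite -[u]mxadjK u0' raddf0.
Qed.

Lemma hermitian_eigenvalue_Re n (H : 'M[C]_n) (lmin lmax : R) z :
  mxadj H = H ->
  (forall u, lmin%:C%C * sqnorm u <= qform H u) ->
  (forall u, qform H u <= lmax%:C%C * sqnorm u) ->
  eigenvalue H z -> lmin <= complex.Re z <= lmax.
Proof.
move=> hH Hlo Hup /eigenvalueP[v vH v0].
have u0 : mxadj v != 0 by apply: contraNneq v0 => v0'; rewrite -[v]mxadjK v0' raddf0.
have Hu : H *m mxadj v = z^* *: mxadj v by rewrite -hH -mxadjM vH mxadjZ.
have Hv : qform H (mxadj v) = z^* * sqnorm (mxadj v).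
  by rewrite /qform -mulmxA Hu -scalemxAr mxE.
have := Hlo (mxadj v); have := Hup (mxadj v).
rewrite Hv !ler_pM2r ?sqnorm_gt0 // => z_le z_ge.
have Re_le (x y : C) : x <= y -> complex.Re x <= complex.Re y by rewrite lecE => /andP[].
have ReJ : complex.Re z^* = complex.Re z by case: z {vH Hu Hv z_le z_ge}.
by rewrite -ReJ (Re_le _ _ z_ge) (Re_le _ _ z_le).
Qed.

Lemma hermitian_spec_rayleigh n (H : 'M[C]_n) : (0 < n)%N -> mxadj H = H ->
  (forall u, (spec_min H)%:C%C * sqnorm u <= qform H u) /\
  (forall u, qform H u <= (spec_abs H)%:C%C * sqnorm u).
Proof.
move=> n_gt0 hH.
have [lmin [lmax [Hlo Hup [u1 u1_0 Hu1] [u2 u2_0 Hu2]]]] := hermitian_rayleigh n_gt0 hH.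
have Re_bounds z : eigenvalue H z -> lmin <= complex.Re z <= lmax.
  exact: hermitian_eigenvalue_Re.
have -> : spec_min H = lmin.
  apply: inf_eq_min => [|_ [z [Hz ->]]]; last by case/andP: (Re_bounds z Hz).
  by exists lmin%:C%C; split=> //; exact: eigenvalue_col hH u1_0 Hu1.
have -> : spec_abs H = lmax.
  apply: sup_eq_max => [|_ [z [Hz ->]]]; last by case/andP: (Re_bounds z Hz).
  by exists lmax%:C%C; split=> //; exact: eigenvalue_col hH u2_0 Hu2.
by [].
Qed.

End Spectrum.

Section KrausSpectralRadius.
Variable R : realType.
Local Notation C := R[i].
Variables (p d : nat) (K : 'I_p -> 'M[C]_d) (lmin lmax : R).
Hypothesis d_gt0 : (0 < d)%N.
Hypothesis K_lo : forall u, lmin%:C%C * sqnorm u <= qform (kraus_gram K) u.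
Hypothesis K_up : forall u, qform (kraus_gram K) u <= lmax%:C%C * sqnorm u.

Let dd_gt0 : (0 < d * d)%N. Proof. by rewrite muln_gt0 d_gt0. Qed.

Lemma kraus_mx_eigenvalue_le z :
  eigenvalue (kraus_mx K) z -> ComplexField.Normc.normc z <= lmax.
Proof.
move=> /eigenvalueP[v vK v0]; rewrite -lecR -norm_normc.
apply: (kraus_eigen_norm_le K_up (V := unvec v)); first by rewrite unvec_eq0.
by rewrite -unvec_mul_kraus_mx vK linearZ.
Qed.

Lemma spec_rad_kraus_mx_le : spec_rad (kraus_mx K) <= lmax.
Proof.
exact: (spec_sup_le (f := @ComplexField.Normc.normc R)) dd_gt0 kraus_mx_eigenvalue_le.
Qed.

Lemma spec_rad_kraus_mx_ge : lmin <= spec_rad (kraus_mx K).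
Proof.
apply/ler_addgt0Pr => eps eps_gt0.
have [Q Qu [Tdiag Toff]] := near_triangular_similar (kraus_mx K) dd_gt0 eps_gt0.
have K_psd Y : psdmx Y -> psdmx (unvec (vec Y *m kraus_mx K)).
  by rewrite unvec_mul_kraus_mx vecK; apply: kraus_map_psd.
apply: (positive_map_growth_le K_psd d_gt0 Qu) => [u|i].
  by rewrite unvec_mul_kraus_mx vecK kraus_map1 qform_subr_scalar subr_ge0.
rewrite (bigD1 i) //= rmorphD lerD // norm_normc lecR.
exact: spec_sup_ge kraus_mx_eigenvalue_le (Tdiag i).
Qed.

End KrausSpectralRadius.

Section ShiftedRowSums.
Variable R : realType.
Local Notation C := R[i].

Lemma rowsum_shift_le n (T F : 'M[C]_n) (a al eps : R) i :
  0 <= a -> complex.Re (T i i) <= al -> \sum_(j | j != i) `|T i j| <= eps%:C%C ->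
  a%:C%C * (`|T i i| ^+ 2 + \sum_j `|F i j|) <= eps%:C%C ->
  \sum_j `|(1%:M + a%:C%C *: T + (a * a)%:C%C *: F) i j| <= (1 + a * (al + 2 * eps))%:C%C.
Proof.
move=> a_ge0 T_al T_off T_small; have aC_ge0 : 0 <= a%:C%C :> C by rewrite lecR.
have entry_le j : `|(1%:M + a%:C%C *: T + (a * a)%:C%C *: F) i j| <=
    `|(i == j)%:R + a%:C%C * T i j| + a%:C%C * a%:C%C * `|F i j|.
  by rewrite !mxE rmorphM; apply: le_trans (ler_normD _ _) _; rewrite normrM ger0_norm ?mulr_ge0.
apply: le_trans (ler_sum _ (fun j _ => entry_le j)) _.
rewrite big_split /= -mulr_sumr (bigD1 i) //= eqxx.
under eq_bigr => j ji do rewrite eq_sym (negbTE ji) add0r normrM (ger0_norm aC_ge0).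
rewrite -mulr_sumr -expr2; have := norm_1p_le (a%:C%C * T i i).
rewrite normrM ger0_norm // exprMn.
have -> : complex.Re (a%:C%C * T i i) = a * complex.Re (T i i).
  by case: (T i i) => x y /=; ring.
move=> diag_le; apply: le_trans (lerD (lerD diag_le (ler_wpM2l aC_ge0 T_off)) (lexx _)) _.
apply: le_trans (_ : (1 + a * al)%:C%C + a%:C%C * eps%:C%C + a%:C%C * eps%:C%C <= _); last first.
  by rewrite -!rmorphM -!rmorphD lecR; lra.
have A_le : (1 + a * complex.Re (T i i))%:C%C <= (1 + a * al)%:C%C :> C.
  by rewrite lecR lerD2l ler_wpM2l.
have B_le : a%:C%C ^+ 2 * `|T i i| ^+ 2 + a%:C%C ^+ 2 * \sum_j `|F i j| <= a%:C%C * eps%:C%C.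
  by move: (ler_wpM2l aC_ge0 T_small); rewrite !mulrDr !mulrA -expr2.
move: A_le B_le; set A1 := _%:C%C; set A2 := _%:C%C; set B1 := _ * `|_| ^+ 2.
set B2 := _ * \sum_j _; set E := a%:C%C * _ => A_le B_le.
rewrite -subr_ge0 (_ : A2 + E + E - (A1 + B1 + E + B2) = A2 - A1 + (E - (B1 + B2))).
  by rewrite addr_ge0 // subr_ge0.
by ring.
Qed.

End ShiftedRowSums.

Section LyapunovSpectralAbscissa.
Variable R : realType.
Local Notation C := R[i].
Variables (d m : nat) (A : 'M[C]_d) (B : 'I_m -> 'M[C]_d).

Lemma M_AB_hermitian : mxadj (M_AB A B) = M_AB A B.
Proof.
rewrite /M_AB -/(kraus_gram B) !mxadjD kraus_gram_hermitian mxadjK.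
by rewrite (addrC (mxadj A)).
Qed.

Lemma unvec_mul_C_AB v :
  unvec (v *m C_AB A B) = mxadj A *m unvec v + unvec v *m A + kraus_map B (unvec v).
Proof.
rewrite /C_AB -{2}mxconj1 !mulmxDr !linearD /=.
by rewrite !unvec_mul_tens -/(kraus_mx B) unvec_mul_kraus_mx mxadj1 mul1mx mulmx1.
Qed.

Lemma C_AB_eigenvalue_Re_le (lmax : R) z :
  (forall u, qform (M_AB A B) u <= lmax%:C%C * sqnorm u) ->
  eigenvalue (C_AB A B) z -> complex.Re z <= lmax.
Proof.
move=> M_up /eigenvalueP[v vC v0].
apply: (lyapunov_eigen_Re_le M_up (V := unvec v)); first by rewrite unvec_eq0.
by rewrite -unvec_mul_C_AB vC linearZ.
Qed.

(* The matrix of the positive map V |-> (I + a A)^* V (I + a A) + a kraus_map B V. *)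
Definition euler_mx (a : R) : 'M[C]_(d * d) :=
  1%:M + a%:C%C *: C_AB A B + (a * a)%:C%C *: (mxconj A *t A).

Lemma qform_unvec_mul_euler_mx a v u :
  qform (unvec (v *m euler_mx a)) u =
  qform (unvec v) ((1%:M + a%:C%C *: A) *m u) + a%:C%C * qform (kraus_map B (unvec v)) u.
Proof.
rewrite /euler_mx [v *m _]mulmxDr [v *m (1%:M + _)]mulmxDr mulmx1 -!scalemxAr.
rewrite !unvecD !unvecZ unvec_mul_C_AB unvec_mul_tens -qform_congr.
rewrite mxadjD mxadj1 mxadjZ conj_realc.
rewrite !mulmxDl !mulmxDr !mul1mx !mulmx1 -!scalemxAl -!scalemxAr ?mulmxA.
by rewrite !qformDl !qformZl !qformDl rmorphM /=; ring.
Qed.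

Lemma euler_mx_psd a : 0 <= a ->
  forall Y, psdmx Y -> psdmx (unvec (vec Y *m euler_mx a)).
Proof.
move=> a_ge0 Y Ypsd u; rewrite qform_unvec_mul_euler_mx vecK.
by rewrite addr_ge0 ?mulr_ge0 ?lecR // kraus_map_psd.
Qed.

Lemma euler_mx_unit_ge (lmin a : R) : 0 <= a ->
  (forall u, lmin%:C%C * sqnorm u <= qform (M_AB A B) u) ->
  psdmx (unvec (vec 1%:M *m euler_mx a) - (1 + a * lmin)%:C%C *: 1%:M).
Proof.
move=> a_ge0 M_lo u; rewrite qform_subr_scalar qform_unvec_mul_euler_mx vecK.
rewrite qform1 kraus_map1 sqnorm_shift.
have := M_lo u; rewrite /M_AB -/(kraus_gram B) !qformDl -subr_ge0 => M_lo_u.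
have aC_ge0 : 0 <= a%:C%C :> C by rewrite lecR.
have := addr_ge0 (mulr_ge0 aC_ge0 M_lo_u) (mulr_ge0 (mulr_ge0 aC_ge0 aC_ge0) (sqnorm_ge0 (A *m u))).
by rewrite rmorphD rmorphM /= rmorph1; congr (0 <= _); ring.
Qed.

Hypothesis d_gt0 : (0 < d)%N.

Let dd_gt0 : (0 < d * d)%N. Proof. by rewrite muln_gt0 d_gt0. Qed.

Lemma spec_abs_C_AB_le (lmax : R) :
  (forall u, qform (M_AB A B) u <= lmax%:C%C * sqnorm u) -> spec_abs (C_AB A B) <= lmax.
Proof.
move=> M_up.
exact: (spec_sup_le (f := @complex.Re R)) dd_gt0 (fun z => C_AB_eigenvalue_Re_le M_up).
Qed.

Lemma spec_abs_C_AB_ge (lmin lmax : R) :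
  (forall u, lmin%:C%C * sqnorm u <= qform (M_AB A B) u) ->
  (forall u, qform (M_AB A B) u <= lmax%:C%C * sqnorm u) ->
  lmin <= spec_abs (C_AB A B).
Proof.
move=> M_lo M_up; apply/ler_addgt0Pr => e e_gt0.
pose eps := e / 2; have eps_gt0 : 0 < eps by rewrite divr_gt0.
have [Q Qu [Tdiag Toff]] := near_triangular_similar (C_AB A B) dd_gt0 eps_gt0.
set T := Q *m C_AB A B *m invmx Q in Tdiag Toff.
pose F := Q *m (mxconj A *t A) *m invmx Q.
pose t := complex.Re (\sum_i \sum_j `|T i j|).
pose f := complex.Re (\sum_i \sum_j `|F i j|).
have tE : t%:C%C = \sum_i \sum_j `|T i j| by rewrite ger0_ReE // sum_norm_ge0.
have fE : f%:C%C = \sum_i \sum_j `|F i j| by rewrite ger0_ReE // sum_norm_ge0.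
have t_ge0 : 0 <= t by rewrite -lecR tE sum_norm_ge0.
have f_ge0 : 0 <= f by rewrite -lecR fE sum_norm_ge0.
pose a := eps / (t ^+ 2 + f + 1).
have den_gt0 : 0 < t ^+ 2 + f + 1 by nra.
have a_gt0 : 0 < a by rewrite divr_gt0.
have a_small : a * (t ^+ 2 + f) <= eps by rewrite mulrAC ler_pdivrMr //; nra.
have QGQ : Q *m euler_mx a *m invmx Q = 1%:M + a%:C%C *: T + (a * a)%:C%C *: F.
  by rewrite /euler_mx !mulmxDr !mulmxDl mulmx1 mulmxV // -!scalemxAr -!scalemxAl.
have rows i : \sum_j `|(Q *m euler_mx a *m invmx Q) i j| <=
    (1 + a * (spec_abs (C_AB A B) + 2 * eps))%:C%C.
  rewrite QGQ; apply: rowsum_shift_le; [exact: ltW | | exact: Toff |].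
    exact: spec_sup_ge (fun z => C_AB_eigenvalue_Re_le M_up) (Tdiag i).
  apply: (@le_trans _ _ (a%:C%C * (t%:C%C ^+ 2 + f%:C%C))); last first.
    by rewrite -rmorphXn -rmorphD -rmorphM lecR.
  rewrite ler_wpM2l ?lecR ?(ltW a_gt0) // tE fE lerD //.
    apply: lerXn2r; rewrite ?nnegrE ?normr_ge0 //; last first.
      exact: le_trans (norm_le_rowsum T i i) (rowsum_le_sum T i).
    exact: sum_norm_ge0.
  exact: rowsum_le_sum.
have := positive_map_growth_le (euler_mx_psd (ltW a_gt0)) d_gt0 Qu
  (euler_mx_unit_ge (ltW a_gt0) M_lo) rows.
by rewrite lerD2l ler_pM2l // /eps; lra.
Qed.

End LyapunovSpectralAbscissa.

Section KrausCons.
Variable R : realType.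
Local Notation C := R[i].
Variables (d m : nat) (A : 'M[C]_d) (B : 'I_m -> 'M[C]_d).

Definition kraus_cons (k : 'I_m.+1) := if unlift ord0 k is Some j then B j else A.

Lemma D_AB_kraus : D_AB A B = kraus_mx kraus_cons.
Proof.
rewrite /kraus_mx big_ord_recl /kraus_cons unlift_none; congr (_ + _).
by apply: eq_bigr => j _; rewrite liftK.
Qed.

Lemma N_AB_kraus : N_AB A B = kraus_gram kraus_cons.
Proof.
rewrite /kraus_gram big_ord_recl /kraus_cons unlift_none; congr (_ + _).
by apply: eq_bigr => j _; rewrite liftK.
Qed.

End KrausCons.

Theorem theorem1p1 (R : realType) (d m : nat) (hd : (0 < d)%N)
  (A : 'M[R[i]]_d) (B : 'I_m -> 'M[R[i]]_d) :
  (spec_min (N_AB A B) <= spec_rad (D_AB A B) <= spec_abs (N_AB A B)) /\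
  (spec_min (M_AB A B) <= spec_abs (C_AB A B) <= spec_abs (M_AB A B)).
Proof.
rewrite N_AB_kraus D_AB_kraus.
have [N_lo N_up] := hermitian_spec_rayleigh hd (kraus_gram_hermitian (kraus_cons A B)).
have [M_lo M_up] := hermitian_spec_rayleigh hd (M_AB_hermitian A B).
split; apply/andP; split.
- exact: spec_rad_kraus_mx_ge hd N_lo N_up.
- exact: spec_rad_kraus_mx_le hd N_up.
- exact (spec_abs_C_AB_ge hd M_lo M_up).
- exact (spec_abs_C_AB_le hd M_up).
Qed.
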